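(* Let $b>1$, $p\ge1$, $R\subseteq\{0,\ldots,p-1\}$ with $(p,R)$ proper. Let $k$ be the greatest divisor of $p$ coprime with $b$ and $d=p/k$. Then for all distinct integers $i,i'$ with $0\le i,i'<k$, the states $id$ and $i'd$ of $\mathcal{A}_{R,p}$ are not Nerode-equivalent.
   Context: $A_b=\{0,\ldots,b-1\}$. $\mathcal{A}_{R,p}$: complete deterministic automaton over $A_b$ with states $\{0,\ldots,p-1\}$, initial $0$, final states $R$, transitions $n\xrightarrow{a}(nb+a)\bmod p$. $(p,R)$ is proper if $p$ is the smallest period of $R+p\mathbb{N}$, i.e. there are no $1\le p'<p$, $R'\subseteq\{0,\ldots,p'-1\}$ with $R+p\mathbb{N}=R'+p'\mathbb{N}$. Two states $s,s'$ are Nerode-equivalent if for every word $u$, $s\cdot u$ is final iff $s'\cdot u$ is final ($s\cdot u$ = state reached from $s$ reading $u$). *)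

From mathcomp Require Import all_boot.
Set Implicit Arguments. Unset Strict Implicit. Unset Printing Implicit Defensive.

Definition is_word (b : nat) (u : seq nat) : bool := all (fun a => a < b) u.

Definition delta (b p n a : nat) : nat := (n * b + a) %% p.

Definition run (b p s : nat) (u : seq nat) : nat := foldl (delta b p) s u.

Definition perset (R : pred nat) (p : nat) (x : nat) : Prop :=
  exists r n, R r /\ x = r + p * n.

(* (p,R) proper: p is the smallest period of R + pN. *)
Definition proper_pair (p : nat) (R : pred nat) : Prop :=
  ~ exists p' (R' : pred nat),
      [/\ 1 <= p', p' < p, (forall r, R' r -> r < p') &
          (forall x, perset R p x <-> perset R' p' x)].

Definition nerode_equiv (b p : nat) (R : pred nat) (s s' : nat) : Prop :=
  forall u : seq nat, is_word b u -> R (run b p s u) = R (run b p s' u).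

From mathcomp Require Import all_boot.
From mathcomp Require Import zify.

Set Implicit Arguments.
Unset Strict Implicit.
Unset Printing Implicit Defensive.

(* Reading the base-b expansion of v of length n from state s leads to
   (s b^n + v) mod p.  Choosing n = p makes every residue v < p available, so
   Nerode-equivalence of i d and i' d (i < i') says that y |-> R (y mod p) is
   invariant under the shift c = (i' - i) d b^p, hence under gcd(p, c).  As k
   is coprime to b and 0 < i' - i < k, p = k d does not divide c, so gcd(p, c)
   is a period of R + pN smaller than p, against properness. *)

Fixpoint digits (b n v : nat) : seq nat :=
  if n is n'.+1 then rcons (digits b n' (v %/ b)) (v %% b) else [::].

Lemma is_word_digits b n v : 0 < b -> is_word b (digits b n v).
Proof.
move=> b_gt0; elim: n v => [|n IHn] v //=.
by rewrite /is_word all_rcons ltn_mod b_gt0; apply: IHn.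
Qed.

Lemma run_digits b p s n v : 0 < b -> s < p -> v < b ^ n ->
  run b p s (digits b n v) = (s * b ^ n + v) %% p.
Proof.
move=> b_gt0 s_lt_p; elim: n v => [|n IHn] v /=.
  by rewrite expn0 muln1; case: v => // _; rewrite addn0 modn_small.
move=> v_lt; rewrite /run foldl_rcons -/(run b p s _).
rewrite IHn; last by rewrite ltn_divLR // -expnSr.
rewrite /delta -modnDml modnMml modnDml mulnDl -mulnA -expnSr -addnA.
by rewrite -divn_eq.
Qed.

Definition periodic (f : pred nat) (c : nat) : Prop := forall y, f (y + c) = f y.

Section Periods.

Variable f : pred nat.

Lemma periodicMn c n : periodic f c -> periodic f (n * c).
Proof.
move=> fc; elim: n => [|n IHn] y; first by rewrite addn0.
by rewrite mulSn addnA IHn fc.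
Qed.

Lemma periodic_modn c : periodic f c -> forall y, f (y %% c) = f y.
Proof.
by move=> fc y; rewrite {2}(divn_eq y c) addnC (periodicMn _ fc).
Qed.

Lemma periodic_gcdn m n : 0 < m -> periodic f m -> periodic f n ->
  periodic f (gcdn m n).
Proof.
move=> m_gt0 fm fn y; have [a _ /dvdnP[q Eq]] := Bezoutl n m_gt0.
by rewrite -[LHS](periodicMn a fn) -addnA Eq (periodicMn q fm).
Qed.

(* Every y is congruent mod m to a + x, with x := y + a (m - 1). *)
Lemma periodic_translate m a c : 0 < m -> periodic f m ->
  (forall x, f (a + x) = f (a + c + x)) -> periodic f c.
Proof.
case: m => // m _ fm fac y.
rewrite -(periodicMn a fm) -[in RHS](periodicMn a fm).
have -> : y + a * m.+1 = a + (y + a * m) by rewrite mulnS; lia.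
by rewrite fac; congr f; rewrite mulnS; lia.
Qed.

End Periods.

Lemma perset_modn (R : pred nat) p x : 0 < p -> (forall r, R r -> r < p) ->
  perset R p x <-> R (x %% p).
Proof.
move=> p_gt0 R_lt; split=> [[r [n [Rr ->]]] | Rx].
  by rewrite addnC mulnC modnMDl modn_small ?R_lt.
by exists (x %% p), (x %/ p); rewrite addnC mulnC -divn_eq.
Qed.

Lemma proper_pair_period_geq p (R : pred nat) g :
  0 < p -> (forall r, R r -> r < p) -> proper_pair p R ->
  0 < g -> periodic (fun y => R (y %% p)) g -> p <= g.
Proof.
move=> p_gt0 R_lt properR g_gt0 Rg; rewrite leqNgt; apply/negP=> g_lt_p.
apply: properR; exists g, [pred r | (r < g) && R r].
split=> // [r /andP[] // | x].
rewrite !perset_modn // => [|r /andP[] //].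
rewrite /= ltn_mod g_gt0 -(periodic_modn Rg x) modn_small //.
exact: ltn_trans (ltn_pmod x g_gt0) g_lt_p.
Qed.

Lemma nerode_equiv_periodic b p (R : pred nat) s s' :
  1 < b -> s <= s' -> s' < p -> nerode_equiv b p R s s' ->
  periodic (fun y => R (y %% p)) ((s' - s) * b ^ p).
Proof.
move=> b_gt1 le_ss' s'_lt_p eqv.
have p_gt0 : 0 < p by apply: leq_ltn_trans s'_lt_p.
apply: (@periodic_translate _ p (s * b ^ p)) => // [y | x].
  by rewrite modnDr.
rewrite -mulnDl subnKC // -modnDmr -[in RHS]modnDmr.
have x_lt : x %% p < b ^ p.
  exact: ltn_trans (ltn_pmod x p_gt0) (ltn_expl p b_gt1).
rewrite -!run_digits ?(ltnW b_gt1) //; last exact: leq_ltn_trans s'_lt_p.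
by apply: eqv; apply: is_word_digits; apply: ltnW.
Qed.

Lemma ndvdn_mul_coprime k d j b n : coprime k b -> 0 < d -> 0 < j < k ->
  ~~ (k * d %| j * d * b ^ n).
Proof.
move=> cop_kb d_gt0 /andP[j_gt0 j_lt_k].
rewrite mulnAC dvdn_pmul2r // Gauss_dvdl ?coprimeXr //.
by apply/negP=> /(dvdn_leq j_gt0); rewrite leqNgt j_lt_k.
Qed.

Theorem lemma19 (b p : nat) (R : pred nat) (k : nat) :
  1 < b -> 1 <= p ->
  (forall r, R r -> r < p) ->
  proper_pair p R ->
  k %| p -> coprime k b ->
  (forall k', k' %| p -> coprime k' b -> k' <= k) ->
  forall i i' : nat, i < k -> i' < k -> i != i' ->
  ~ nerode_equiv b p R (i * (p %/ k)) (i' * (p %/ k)).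
Proof.
move=> b_gt1 p_gt0 R_lt properR k_dvd_p cop_kb _ i i' i_lt_k i'_lt_k.
wlog lt_ii' : i i' i_lt_k i'_lt_k / i < i'.
  move=> W ne_ii'; case: (ltngtP i i') => [lt | lt eqv | eq_ii']; first exact: W.
    by apply: (W i' i) => //; [rewrite eq_sym | move=> u /eqv ->].
  by rewrite eq_ii' eqxx in ne_ii'.
move=> _ eqv; have := divnK k_dvd_p; move: (p %/ k) eqv => d eqv dkE.
have d_gt0 : 0 < d by move: p_gt0; rewrite -dkE muln_gt0 => /andP[].
set c := (i' - i) * d * b ^ p.
have Rc : periodic (fun y => R (y %% p)) c.
  rewrite /c mulnBl; apply: nerode_equiv_periodic eqv => //.
    by rewrite leq_pmul2r // ltnW.
  by rewrite -dkE mulnC ltn_pmul2l.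
have Rp : periodic (fun y => R (y %% p)) p by move=> y; rewrite modnDr.
have gcd_gt0 : 0 < gcdn p c by rewrite gcdn_gt0 p_gt0.
have le_p_gcd := proper_pair_period_geq p_gt0 R_lt properR gcd_gt0
  (periodic_gcdn p_gt0 Rp Rc).
have /gcdn_idPl : gcdn p c = p.
  by apply/eqP; rewrite eqn_leq le_p_gcd dvdn_leq ?dvdn_gcdl.
apply/negP; rewrite -dkE mulnC; apply: ndvdn_mul_coprime => //.
by rewrite subn_gt0 lt_ii' (leq_ltn_trans (leq_subr i i') i'_lt_k).
Qed.
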